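(* Let $2\le n\le N$ and $k\ge0$, and assume that the property $(\mathbf{SS}.N.I.k.\tilde n)$ holds for all $\tilde n\in[1,n-1]$. Then for every partially interactive $n$-particle cube $\Lambda^{(n)}_{L_{k+1}}(\mathbf u)$, $$\mathbb P\Big\{\Lambda^{(n)}_{L_{k+1}}(\mathbf u)\text{ is }(\tfrac12,I)\text{-PT}\Big\}\le 3^{2(n-1)d}L_{k+1}^{-\frac{p^{(n-1)}}2+2(n-1)d}.$$
   Context: Setting. Fix $N\ge2$, $d\ge1$, $r>0$, $g\ne0$. For $1\le m\le N$, points of $\mathbb Z^{md}$ are $\mathbf x=(x_1,\dots,x_m)$, $x_j\in\mathbb Z^d$, with $\|x_j\|=\max_i|x_j^{(i)}|$, $\|\mathbf x\|=\max_j\|x_j\|$, $\langle\mathbf x\rangle=\max\{1,\|\mathbf x\|\}$. The random $m$-particle operator is $\mathbf H^{(m)}_\omega=\frac1g(\mathbf T+\mathbf U)+\mathbf V(\cdot,\omega)$: $\mathbf T(\mathbf x,\mathbf y)=\langle y_j-x_j\rangle^{-r}$ if there is $j$ with $x_i=y_i$ for all $i\ne j$, else $0$; $\mathbf U(\mathbf x)=\sum_{j_1<j_2}U(x_{j_1},x_{j_2})$ with $U$ symmetric, $|U|\le M_1$, $U(x,x')=0$ if $\|x-x'\|\ge\mathrm r_0$ ($\mathrm r_0\ge1$); $\mathbf V(\mathbf x,\omega)=\sum_jV(x_j,\omega)$ with $V(x,\omega)$, $x\in\mathbb Z^d$, i.i.d. with distribution $\mu$ supported in $[-M,M]$ and Hölder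 continuous of order $\rho>0$. Cubes $\Lambda^{(m)}_L(\mathbf u)=\{\mathbf x:\|\mathbf x-\mathbf u\|\le L\}$; $\mathbf H^{(m)}_\Lambda$ is the restriction to $\Lambda$, $\mathbf G^{(m)}_\Lambda(E)=(\mathbf H^{(m)}_\Lambda-E)^{-1}$. Projections $\Pi_j\mathbf x=x_j$, $\Pi_J\Lambda=\bigcup_{j\in J}\Pi_j\Lambda$, $\Pi\Lambda=\Pi_{\{1,\dots,m\}}\Lambda$. Separability: $\Lambda^{(m)}_L(\mathbf u),\Lambda^{(m)}_L(\mathbf v)$ are weakly separable if for some nonempty $J\subseteq\{1,\dots,m\}$ either $\Pi_J\Lambda^{(m)}_{L+\mathrm r_0}(\mathbf u)\cap(\Pi_{J^C}\Lambda^{(m)}_{L+\mathrm r_0}(\mathbf u)\cup\Pi\Lambda^{(m)}_{L+\mathrm r_0}(\mathbf v))=\emptyset$ or the same with $\mathbf u,\mathbf v$ swapped; separable if in addition $\|\mathbf u-\mathbf v\|>11mL$. PI/FI: $\Lambda^{(n)}_L(\mathbf u)$ is fully interactive if $\min_{x\in\mathbb Z^d}\max_j\|u_j-x\|\le2n(L+\mathrm r_0)$ and partially interactive (PI) otherwise. For a PI cube there is a nonempty proper $J$ with $\Pi_J\Lambda^{(n)}_{L+\mathrm r_0}(\mathbf u)\cap\Pi_{J^C}\Lambda^{(n)}_{L+\mathrm r_0}(\mathbf u)=\emptyset$, giving the canonical decomposition $\Lambda^{(n)}_L(\mathbf u)=\Lambda^{(n')}_L(\mathbf u')\times\Lambda^{(n'')}_L(\mathbf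 u'')$, $n'=|J|$, $\mathbf u'=(u_j)_{j\in J}$, $\mathbf u''=(u_j)_{j\in J^C}$. Sobolev norm of a matrix $\mathcal M$ on $X\times Y$: $\|\mathcal M\|_s^2=C_0\sum_{\mathbf v\in X-Y}(\sup_{\mathbf x-\mathbf y=\mathbf v}|\mathcal M(\mathbf x,\mathbf y)|)^2\langle\mathbf v\rangle^{2s}$, $C_0=C_0(s_0^{(m)})>0$ fixed. With parameters $\tau_m\ge0$, $md/2<s_0^{(m)}\le r_m<r-md/2$, an $m$-particle cube $\Lambda^{(m)}_L(\mathbf u)$ is $(E,\tfrac12)$-NS if $\mathbf G^{(m)}_{\Lambda^{(m)}_L(\mathbf u)}(E)$ exists and $\|\mathbf G^{(m)}_{\Lambda^{(m)}_L(\mathbf u)}(E)\|_s\le L^{\tau_m+s/2}$ for all $s\in[s_0^{(m)},r_m]$, and $(E,\tfrac12)$-S otherwise. Parameters: $I=[-MN-1,MN+1]$, $p^{(m)}=18^{N-m}p_0$ with $p_0\ge20Nd$, $L_k=L_0^{4^k}$. Property $(\mathbf{SS}.N.I.k.m)$: for every pair of separable $m$-particle cubes $\Lambda^{(m)}_{L_k}(\mathbf x),\Lambda^{(m)}_{L_k}(\mathbf y)$, $\mathbb P\{\exists E\in I:\text{both }(E,\tfrac12)\text{-S}\}<L_k^{-2p^{(m)}}$. Tunneling: an $m$-particle cube $\Lambda^{(m)}_{L_{k+1}}(\mathbf u)$ is $(\tfrac12,I)$-tunneling if there exist $E\in I$ and two separable $(E,\tfrac12)$-S cubes $\Lambda^{(m)}_{L_k}(\mathbf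 x),\Lambda^{(m)}_{L_k}(\mathbf y)\subset\Lambda^{(m)}_{L_{k+1}}(\mathbf u)$. A PI cube $\Lambda^{(n)}_{L_{k+1}}(\mathbf u)$ with canonical decomposition $\Lambda^{(n')}_{L_{k+1}}(\mathbf u')\times\Lambda^{(n'')}_{L_{k+1}}(\mathbf u'')$ is $(\tfrac12,I)$-partially tunneling ($(\tfrac12,I)$-PT) if at least one of $\Lambda^{(n')}_{L_{k+1}}(\mathbf u')$, $\Lambda^{(n'')}_{L_{k+1}}(\mathbf u'')$ is $(\tfrac12,I)$-tunneling. *)

From HB Require Import structures.
From mathcomp Require Import all_boot all_order all_algebra.
From mathcomp Require Import all_classical all_reals all_analysis.
Set Implicit Arguments. Unset Strict Implicit. Unset Printing Implicit Defensive.
Import Order.TTheory GRing.Theory Num.Theory.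
Import numFieldNormedType.Exports.
Local Open Scope classical_set_scope.
Local Open Scope ring_scope.

Definition site (d : nat) := {ffun 'I_d -> int}.
Definition cfg (m d : nat) := {ffun 'I_m -> site d}.

Definition nrm_site d (x : site d) : nat := \max_(i < d) `|x i|%N.
Definition nrm_cfg m d (x : cfg m d) : nat := \max_(j < m) nrm_site (x j).
Definition brk_site d (x : site d) : nat := maxn 1 (nrm_site x).
Definition brk_cfg m d (x : cfg m d) : nat := maxn 1 (nrm_cfg x).

Definition sub_site d (x y : site d) : site d := [ffun i => x i - y i].
Definition sub_cfg m d (x y : cfg m d) : cfg m d :=
  [ffun j => sub_site (x j) (y j)].

Definition in_cube (R : realType) m d (L : R) (u x : cfg m d) : Prop :=
  ((nrm_cfg (sub_cfg x u))%:R <= L)%R.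

Definition cube_idx (m d L : nat) := {ffun 'I_m -> {ffun 'I_d -> 'I_(2 * L).+1}}.
Definition cube_pt m d L (u : cfg m d) (k : cube_idx m d L) : cfg m d :=
  [ffun j => [ffun i => u j i + (k j i : nat)%:Z - L%:Z]].
Arguments cube_pt {m d} L u k.

Section Hamiltonian.
Variables (R : realType) (Omega : Type) (d : nat).
Variables (g r : R) (U : site d -> site d -> R) (V : site d -> Omega -> R).

Definition Tkin m (x y : cfg m d) : R :=
  match [pick j : 'I_m | [forall i : 'I_m, (i != j) ==> (x i == y i)]] with
  | Some j => ((brk_site (sub_site (y j) (x j)))%:R `^ (- r))%R
  | None => 0
  end.
Definition Uint m (x : cfg m d) : R :=
  \sum_(j1 < m) \sum_(j2 < m | (j1 < j2)%N) U (x j1) (x j2).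
Definition Vpot m (w : Omega) (x : cfg m d) : R := \sum_(j < m) V (x j) w.
Definition Hm m (w : Omega) (x y : cfg m d) : R :=
  g^-1 * (Tkin x y + (x == y)%:R * Uint x) + (x == y)%:R * Vpot w x.

Definition HLmE m (L : nat) (u : cfg m d) (w : Omega) (E : R)
  (k k' : cube_idx m d L) : R :=
  Hm w (cube_pt L u k) (cube_pt L u k') - (k == k')%:R * E.
Arguments HLmE {m} L u w E k k'.

Definition is_inverse (T : finType) (A G : T -> T -> R) : Prop :=
  (forall x z, \sum_(y : T) A x y * G y z = (x == z)%:R) /\
  (forall x z, \sum_(y : T) G x y * A y z = (x == z)%:R).

Definition sob_norm m (L : nat) (u : cfg m d) (C0 s : R)
  (M : cube_idx m d L -> cube_idx m d L -> R) : R :=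
  Num.sqrt (C0 * \sum_(v <- undup [seq sub_cfg (cube_pt L u p.1) (cube_pt L u p.2)
                                   | p : cube_idx m d L * cube_idx m d L])
     ((\big[Num.max/0]_(p : cube_idx m d L * cube_idx m d L
          | sub_cfg (cube_pt L u p.1) (cube_pt L u p.2) == v) `|M p.1 p.2|) ^+ 2
      * (brk_cfg v)%:R `^ (2 * s))).
Arguments sob_norm {m} L u C0 s M.

(* (E,1/2)-NS and (E,1/2)-S cubes; tau, s0, rr, C0 are the parameters  *)
(* tau_m, s_0^(m), r_m, C_0(s_0^(m)) indexed by the particle number m. *)
Variables (tau s0 rr C0 : nat -> R).
Definition NS m (L : nat) (u : cfg m d) (w : Omega) (E : R) : Prop :=
  exists G, is_inverse (HLmE L u w E) G /\
    forall s, (s0 m <= s <= rr m)%R ->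
      (sob_norm L u (C0 m) s G <= (L%:R : R) `^ (tau m + s / 2))%R.
Definition Sing m (L : nat) (u : cfg m d) (w : Omega) (E : R) : Prop :=
  ~ NS L u w E.
End Hamiltonian.

Definition in_proj (R : realType) m d (J : {set 'I_m}) (L : R) (u : cfg m d)
  (x : site d) : Prop :=
  exists2 j, j \in J & ((nrm_site (sub_site x (u j)))%:R <= L)%R.

Definition wsep_dir (R : realType) m d (r0 L : R) (J : {set 'I_m}) (u v : cfg m d) :=
  forall x : site d, in_proj J (L + r0) u x ->
    ~ (in_proj (~: J)%SET (L + r0) u x \/ in_proj [set: 'I_m]%SET (L + r0) v x).

Definition weakly_separable (R : realType) m d (r0 L : R) (u v : cfg m d) : Prop :=
  exists J : {set 'I_m}, (0 < #|J|)%N /\ (wsep_dir r0 L J u v \/ wsep_dir r0 L J v u).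

Definition separable (R : realType) m d (r0 L : R) (u v : cfg m d) : Prop :=
  weakly_separable r0 L u v /\ ((11 * m)%:R * L < (nrm_cfg (sub_cfg u v))%:R)%R.

Definition PI (R : realType) n d (r0 L : R) (u : cfg n d) : Prop :=
  forall x : site d,
    (2 * n%:R * (L + r0) < (\max_(j < n) nrm_site (sub_site (u j) x))%:R)%R.

Definition subcfg n d (J : {set 'I_n}) (u : cfg n d) : cfg #|J| d :=
  [ffun i => u (enum_val i)].

Definition outerP dO (Omega : measurableType dO) (R : realType)
  (P : probability Omega R) (A : set Omega) : \bar R :=
  ereal_inf [set P B | B in [set B | measurable B /\ A `<=` B]].

Definition Lk (L0 k : nat) : nat := L0 ^ (4 ^ k).

Definition iid_law dO (Omega : measurableType dO) (R : realType) d
  (P : probability Omega R) (V : site d -> Omega -> R) (mu : probability R R) :=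
  (forall x, measurable_fun setT (V x)) /\
  (forall x (B : set R), measurable B -> P [set w | B (V x w)] = mu B) /\
  (forall (s : seq (site d)) (B : site d -> set R), uniq s ->
     (forall x, measurable (B x)) ->
     P [set w | forall x, x \in s -> B x (V x w)] =
     (\prod_(x <- s) P [set w | B x (V x w)])%E).

Definition hoelder_law (R : realType) (mu : probability R R) (rho : R) :=
  exists2 C : R, 0 < C & forall a eps : R, 0 < eps <= 1 ->
    (mu [set` `[a, (a + eps)%R]] <= ((C * eps `^ rho)%R)%:E)%E.

Definition Iint (R : realType) (M : R) (N : nat) : set R :=
  [set E | (- (M * N%:R) - 1 <= E <= M * N%:R + 1)%R].
Definition pexp (R : realType) (N : nat) (p0 : R) (m : nat) : R :=
  ((18 ^ (N - m))%:R * p0)%R.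

Section Events.
Variables (R : realType) (dO : measure_display) (Omega : measurableType dO).
Variables (P : probability Omega R) (d : nat).
Variables (g r : R) (U : site d -> site d -> R) (V : site d -> Omega -> R).
Variables (tau s0 rr C0 : nat -> R) (r0 : R) (I : set R).

Let S m (L : nat) (u : cfg m d) (w : Omega) (E : R) :=
  Sing g r U V tau s0 rr C0 L u w E.

(* Property (SS.N.I.k.m) at scale L = L_k with exponent pm = p^(m) *)
Definition SSprop (m : nat) (L : nat) (pm : R) : Prop :=
  forall x y : cfg m d, separable r0 (L%:R) x y ->
    (outerP P [set w | exists2 E, I E & S L x w E /\ S L y w E]
       < (((L%:R : R) `^ (- (2 * pm)))%R)%:E)%E.

Definition tunneling (m : nat) (Lsmall Lbig : nat) (c : cfg m d) (w : Omega) : Prop :=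
  exists2 E, I E & exists x y : cfg m d,
    [/\ separable r0 (Lsmall%:R) x y,
        (forall z, in_cube (Lsmall%:R : R) x z -> in_cube (Lbig%:R : R) c z),
        (forall z, in_cube (Lsmall%:R : R) y z -> in_cube (Lbig%:R : R) c z),
        S Lsmall x w E & S Lsmall y w E].

Definition part_tunneling n (J : {set 'I_n}) (Lsmall Lbig : nat) (u : cfg n d)
  (w : Omega) : Prop :=
  tunneling Lsmall Lbig (subcfg J u) w \/ tunneling Lsmall Lbig (subcfg (~: J) u) w.
End Events.

Definition decomp (R : realType) n d (r0 L : R) (J : {set 'I_n}) (u : cfg n d) : Prop :=
  [/\ (0 < #|J|)%N, (#|J| < n)%N &
      forall x : site d, in_proj J (L + r0) u x -> ~ in_proj (~: J) (L + r0) u x].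

(* A partially interactive cube is the product of an n'- and an n''-particle
   cube with n', n'' <= n - 1, and it is partially tunneling iff one factor is
   tunneling.  An m-particle factor of radius L_{k+1} tunnels only if, for some
   pair x, y of its lattice points, the cubes of radius L_k around x and y are
   separable and singular at a common E in I.  By (SS.N.I.k.m) and finite
   subadditivity of the outer probability this has probability at most
   (2 L_{k+1} + 1)^{2md} L_k^{-2p^(m)}.  Since L_{k+1} = L_k^4 and p^(m) is
   nonincreasing in m, both terms are at most
   (2 L_{k+1} + 1)^{2(n-1)d} L_{k+1}^{-p^(n-1)/2}, and
   2 (2L + 1)^{2e} <= (3L)^{2e} for L >= 9 absorbs the factor 2. *)

From HB Require Import structures.
From mathcomp Require Import all_boot all_order all_algebra.
From mathcomp Require Import all_classical all_reals all_analysis.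
From mathcomp Require Import zify lra.
Import Order.TTheory GRing.Theory Num.Theory.
Set Implicit Arguments.
Unset Strict Implicit.
Unset Printing Implicit Defensive.
Local Open Scope classical_set_scope.
Local Open Scope ring_scope.

Section OuterProbability.
Variables (dO : measure_display) (Omega : measurableType dO) (R : realType).
Variable P : probability Omega R.

Lemma outerP_le_measure (A B : set Omega) :
  measurable B -> A `<=` B -> (outerP P A <= P B)%E.
Proof. by move=> mB AB; apply: ge_ereal_inf; exists (P B) => //; exists B. Qed.

Lemma outerP_ge0 (A : set Omega) : (0 <= outerP P A)%E.
Proof. by apply: le_ereal_inf_tmp => _ [B [mB _] <-]; apply: measure_ge0. Qed.

Lemma outerP_le1 (A : set Omega) : (outerP P A <= 1)%E.
Proof.
by rewrite -(probability_setT P); apply: outerP_le_measure => //; apply: subsetT.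
Qed.

Lemma outerP_fin_num (A : set Omega) : outerP P A \is a fin_num.
Proof.
by rewrite ge0_fin_numE ?outerP_ge0 // (le_lt_trans (outerP_le1 A)) ?ltry.
Qed.

Lemma le_outerP (A B : set Omega) : A `<=` B -> (outerP P A <= outerP P B)%E.
Proof.
move=> AB; apply: le_ereal_inf_tmp => _ [C [mC BC] <-].
by apply: outerP_le_measure => //; apply: subset_trans BC.
Qed.

Lemma outerP_setU (A B : set Omega) :
  (outerP P (A `|` B) <= outerP P A + outerP P B)%E.
Proof.
apply/lee_addgt0Pr => e e0.
have e20 : 0 < e / 2 by rewrite divr_gt0.
have [_ [CA [mCA ACA] <-] PCA] := lb_ereal_inf_adherent e20 (outerP_fin_num A).
have [_ [CB [mCB BCB] <-] PCB] := lb_ereal_inf_adherent e20 (outerP_fin_num B).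
apply: le_trans (outerP_le_measure (measurableU _ _ mCA mCB) (setUSS ACA BCB)) _.
apply: le_trans (measureU2 _ mCA mCB) _.
rewrite [e in e%:E](splitr e) EFinD addeACA.
by apply: leeD; apply: ltW.
Qed.

Lemma outerP_bigsetU (I : Type) (s : seq I) (A : I -> set Omega) :
  (outerP P (\big[setU/set0]_(i <- s) A i) <= \sum_(i <- s) outerP P (A i))%E.
Proof.
elim: s => [|i s IH].
  by rewrite !big_nil (le_trans (outerP_le_measure measurable0 (subset_refl _))) ?measure0.
by rewrite !big_cons (le_trans (outerP_setU _ _)) // leeD2l.
Qed.

End OuterProbability.

Lemma coord_le_nrm_cfg m d (x : cfg m d) j i : (`|x j i| <= nrm_cfg x)%N.
Proof. exact: leq_trans (leq_bigmax i) (leq_bigmax (F := fun j => nrm_site (x j)) j). Qed.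

Lemma nrm_cfg_subxx m d (x : cfg m d) : nrm_cfg (sub_cfg x x) = 0%N.
Proof.
by rewrite /nrm_cfg big1 // => j _; rewrite /nrm_site big1 // => i _; rewrite !ffunE subrr.
Qed.

Lemma cube_pt_onto m d L (c x : cfg m d) :
  (nrm_cfg (sub_cfg x c) <= L)%N -> exists k : cube_idx m d L, cube_pt L c k = x.
Proof.
move=> xc_le_L.
have le_L j i : (`|x j i - c j i| <= L)%N.
  by have := coord_le_nrm_cfg (sub_cfg x c) j i; rewrite !ffunE => /leq_trans; apply.
exists [ffun j => [ffun i => inord `|(x j i - c j i + L%:Z)%R|%N]].
apply/ffunP => j; apply/ffunP => i; rewrite !ffunE inordK;
  by have := le_L j i; move: (x j i) (c j i) => a b; lia.
Qed.

Lemma card_cube_idx m d L : #|cube_idx m d L| = ((2 * L).+1 ^ (m * d))%N.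
Proof. by rewrite /cube_idx !card_ffun !card_ord -expnM (mulnC d). Qed.

Section Tunneling.
Variables (R : realType) (dO : measure_display) (Omega : measurableType dO).
Variables (P : probability Omega R) (d : nat).
Variables (g r : R) (U : site d -> site d -> R) (V : site d -> Omega -> R).
Variables (tau s0 rr C0 : nat -> R) (r0 : R) (I : set R).

Let S m (L : nat) (x : cfg m d) w E := Sing g r U V tau s0 rr C0 L x w E.

Lemma in_cube_subcube m (Ls Lb : nat) (c x : cfg m d) :
  (forall z, in_cube (Ls%:R : R) x z -> in_cube (Lb%:R : R) c z) ->
  exists k : cube_idx m d Lb, cube_pt Lb c k = x.
Proof.
move=> sub; apply: cube_pt_onto; rewrite -(ler_nat R); apply: sub.
by rewrite /in_cube nrm_cfg_subxx ler0n.
Qed.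

Lemma outerP_tunneling_le m (Ls Lb : nat) (pm : R) (c : cfg m d) :
  SSprop P g r U V tau s0 rr C0 r0 I m Ls pm ->
  (outerP P [set w | tunneling g r U V tau s0 rr C0 r0 I Ls Lb c w]
   <= ((#|cube_idx m d Lb| ^ 2)%:R * (Ls%:R `^ (- (2 * pm))))%:E)%E.
Proof.
move=> SS; set t := _ `^ _.
pose pt := cube_pt Lb c.
pose pair_event (q : cube_idx m d Lb * cube_idx m d Lb) := [set w |
  separable r0 (Ls%:R : R) (pt q.1) (pt q.2) /\
  exists2 E, I E & S Ls (pt q.1) w E /\ S Ls (pt q.2) w E].
have tunneling_sub : [set w | tunneling g r U V tau s0 rr C0 r0 I Ls Lb c w]
    `<=` \big[setU/set0]_(q <- index_enum _) pair_event q.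
  move=> w [E IE [x [y [xy_sep /in_cube_subcube [kx ekx] /in_cube_subcube [ky eky] Sx Sy]]]].
  rewrite -bigcup_seq; exists (kx, ky); first exact: mem_index_enum.
  by rewrite /pair_event /pt /= ekx eky; split => //; exists E.
have pair_event_le q : (outerP P (pair_event q) <= t%:E)%E.
  have [q_sep|q_nsep] := pselect (separable r0 (Ls%:R : R) (pt q.1) (pt q.2)).
    by apply: le_trans (ltW (SS _ _ q_sep)); apply: le_outerP => w [].
  have no_pair : pair_event q `<=` set0 by move=> w [].
  apply: le_trans (outerP_le_measure P measurable0 no_pair) _.
  by rewrite measure0 lee_fin powR_ge0.
apply: le_trans (le_outerP P tunneling_sub) _.
apply: le_trans (outerP_bigsetU P _ _) _.
apply: le_trans (lee_sum _ (fun q _ => pair_event_le q)) _.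
by rewrite sumEFin lee_fin sumr_const card_prod mulr_natl mulnn.
Qed.

End Tunneling.

Lemma Lk_succ L0 k : Lk L0 k.+1 = (Lk L0 k ^ 4)%N.
Proof. by rewrite /Lk expnS mulnC expnM. Qed.

Lemma pexp_le (R : realType) N (p0 : R) m m' :
  0 <= p0 -> (m <= m')%N -> pexp N p0 m' <= pexp N p0 m.
Proof. by move=> p0_ge0 le_mm'; rewrite ler_wpM2r // ler_nat leq_pexp2l //; lia. Qed.

Lemma powR_pow4_le (R : realType) (a p q : R) :
  1 <= a -> p <= q -> a `^ (- (2 * q)) <= (a ^+ 4) `^ (- (p / 2)).
Proof.
move=> a_ge1 le_pq; rewrite -powR_mulrn ?(le_trans ler01) // -powRrM.
by apply: ler_powR => //; lra.
Qed.

Lemma double_expn_le a b e : (2 * a <= b)%N -> (0 < e)%N -> (2 * a ^ e <= b ^ e)%N.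
Proof.
move=> le_2ab e_gt0; apply: (@leq_trans ((2 * a) ^ e)); last by rewrite leq_exp2r.
by rewrite expnMn leq_mul2r (leq_pexp2l (isT : 0 < 2)%N e_gt0) orbT.
Qed.

Lemma double_odd_expn_le L e : (9 <= L)%N -> (0 < e)%N ->
  (2 * (2 * L).+1 ^ (2 * e) <= (3 * L) ^ (2 * e))%N.
Proof. by move=> L_ge9 e_gt0; rewrite !(expnM _ 2 e) double_expn_le //; nia. Qed.

Lemma tunneling_bounds_sum_le (R : realType) (N d n n1 n2 L0 k : nat) (p0 : R) :
  (1 < L0)%N -> (0 < d)%N -> (0 < n1 < n)%N -> (0 < n2 < n)%N -> 0 <= p0 ->
  (#|cube_idx n1 d (Lk L0 k.+1)| ^ 2)%:R * (Lk L0 k)%:R `^ (- (2 * pexp N p0 n1))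
  + (#|cube_idx n2 d (Lk L0 k.+1)| ^ 2)%:R * (Lk L0 k)%:R `^ (- (2 * pexp N p0 n2))
  <= (3 ^ (2 * (n - 1) * d))%:R
     * (Lk L0 k.+1)%:R `^ (- (pexp N p0 (n - 1) / 2) + (2 * (n - 1) * d)%:R) :> R.
Proof.
move=> L0_gt1 d_gt0 n1_bnd n2_bnd p0_ge0.
set Ls := Lk L0 k; set Lb := Lk L0 k.+1; set e := ((n - 1) * d)%N.
set X := (Lb%:R : R) `^ (- (pexp N p0 (n - 1) / 2)).
have Ls_ge2 : (2 <= Ls)%N.
  by rewrite /Ls /Lk (leq_trans L0_gt1) // -{1}(expn1 L0) leq_pexp2l ?expn_gt0 // ltnW.
have Lb_ge9 : (9 <= Lb)%N.
  by rewrite /Lb Lk_succ -/Ls (@leq_trans (2 ^ 4)) // leq_exp2r.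
have term_le q : (0 < q < n)%N ->
    (#|cube_idx q d Lb| ^ 2)%:R * Ls%:R `^ (- (2 * pexp N p0 q))
    <= ((2 * Lb).+1 ^ (2 * e))%:R * X.
  move=> q_bnd; apply: ler_pM; rewrite ?ler0n ?powR_ge0 //.
    by rewrite ler_nat card_cube_idx -expnM leq_pexp2l //; nia.
  by rewrite /X /Lb Lk_succ natrX powR_pow4_le ?ler1n ?pexp_le //; lia.
apply: le_trans (lerD (term_le _ n1_bnd) (term_le _ n2_bnd)) _.
rewrite -mulrDl -natrD addnn -mul2n -mulnA -/e powRD; last first.
  by apply/implyP => _; rewrite pnatr_eq0 -lt0n; lia.
rewrite powR_mulrn ?ler0n // (mulrC X) mulrA ler_wpM2r ?powR_ge0 //.
by rewrite -natrX -natrM -expnMn ler_nat double_odd_expn_le //; nia.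
Qed.

Theorem lemma3p3
  (R : realType) (dO : measure_display) (Omega : measurableType dO)
  (P : probability Omega R)
  (N d : nat) (r g r0 M1 M rho p0 : R) (L0 n k : nat)
  (U : site d -> site d -> R) (V : site d -> Omega -> R)
  (mu : probability R R) (tau s0 rr C0 : nat -> R) :
  (2 <= N)%N -> (1 <= d)%N -> 0 < r -> g != 0 ->
  (* two-body interaction *)
  1 <= r0 ->
  (forall x y, U x y = U y x) ->
  (forall x y, `|U x y| <= M1) ->
  (forall x y, r0 <= (nrm_site (sub_site x y))%:R -> U x y = 0) ->
  (* i.i.d. random potential with law mu supported in [-M,M], Hoelder of order rho *)
  iid_law P V mu ->
  mu [set` `[- M, M]] = 1%E ->
  0 < rho -> hoelder_law mu rho ->
  (* parameters of the Sobolev norms *)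
  (forall m, (1 <= m <= N)%N ->
     [/\ 0 <= tau m, 0 < C0 m, (m * d)%:R / 2 < s0 m, s0 m <= rr m
       & rr m < r - (m * d)%:R / 2]) ->
  20 * N%:R * d%:R <= p0 ->
  (1 <= L0)%N ->
  (2 <= n <= N)%N ->
  (forall nt, (1 <= nt <= n - 1)%N ->
     SSprop P g r U V tau s0 rr C0 r0 (Iint M N) nt (Lk L0 k) (pexp N p0 nt)) ->
  forall u : cfg n d, PI r0 (Lk L0 k.+1)%:R u ->
  forall J : {set 'I_n}, decomp r0 (Lk L0 k.+1)%:R J u ->
  (outerP P [set w | part_tunneling g r U V tau s0 rr C0 r0 (Iint M N) J
                        (Lk L0 k) (Lk L0 k.+1) u w]
   <= ((3 ^ (2 * (n - 1) * d))%:R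
        * (Lk L0 k.+1)%:R `^ (- (pexp N p0 (n - 1) / 2) + (2 * (n - 1) * d)%:R))%:E)%E.
Proof.
move=> _ d_gt0 _ _ _ _ _ _ _ _ _ _ _ p0_big L0_ge1 n_bnd SS u _ J [J_gt0 J_lt_n _].
have p0_ge0 : 0 <= p0 by apply: le_trans p0_big; rewrite !mulr_ge0 ?ler0n.
(* For L0 = 1 all scales are 1 and the counting bound fails, but then the
   right-hand side is at least 1. *)
have [L0_le1|L0_gt1] := leqP L0 1.
  have -> : L0 = 1%N by lia.
  apply: le_trans (outerP_le1 P _) _.
  by rewrite lee_fin /Lk exp1n powR1 mulr1 ler1n expn_gt0.
have cardJC : (#|J| + #|~: J|)%N = n by rewrite cardsC card_ord.
have J_bnd : (0 < #|J| <= n - 1)%N by lia.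
have JC_bnd : (0 < #|~: J| <= n - 1)%N by lia.
apply: le_trans (outerP_setU P _ _) _.
apply: le_trans (leeD
  (outerP_tunneling_le (Lk L0 k.+1) (subcfg J u) (SS _ J_bnd))
  (outerP_tunneling_le (Lk L0 k.+1) (subcfg (~: J) u) (SS _ JC_bnd))) _.
by rewrite -EFinD lee_fin tunneling_bounds_sum_le //; lia.
Qed.
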